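(* Let $(\Sigma_+,\Sigma_-,N_1,N_2,N_3)$ be a solution of the Wainwright–Hsu system satisfying the constraint, with $N_1<0$ and $N_2,N_3>0$. Then $\lim_{\tau\to\infty}N_1(\tau)=0$ and $\lim_{\tau\to\infty}N_2(\tau)=\lim_{\tau\to\infty}N_3(\tau)=\infty$.
   Context: Wainwright–Hsu system: for functions $N_1,N_2,N_3,\Sigma_+,\Sigma_-$ of $\tau\in\mathbb{R}$ (prime denotes $d/d\tau$), $N_1'=(q-4\Sigma_+)N_1$, $N_2'=(q+2\Sigma_++2\sqrt3\Sigma_-)N_2$, $N_3'=(q+2\Sigma_+-2\sqrt3\Sigma_-)N_3$, $\Sigma_+'=-(2-q)\Sigma_+-3S_+$, $\Sigma_-'=-(2-q)\Sigma_--3S_-$, where $q=2(\Sigma_+^2+\Sigma_-^2)$, $S_+=\frac12[(N_2-N_3)^2-N_1(2N_1-N_2-N_3)]$, $S_-=\frac{\sqrt3}{2}(N_3-N_2)(N_1-N_2-N_3)$, together with the constraint $\Sigma_+^2+\Sigma_-^2+\frac34[N_1^2+N_2^2+N_3^2-2(N_1N_2+N_2N_3+N_1N_3)]=1$. Solutions with these sign conditions exist for all $\tau\in\mathbb{R}$ and the signs are preserved. *)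

From Stdlib Require Import Reals.
From Coquelicot Require Import Coquelicot.
Open Scope R_scope.

Definition WH_q (sp sm : R) : R := 2 * (sp ^ 2 + sm ^ 2).

Definition WH_Splus (n1 n2 n3 : R) : R :=
  / 2 * ((n2 - n3) ^ 2 - n1 * (2 * n1 - n2 - n3)).

Definition WH_Sminus (n1 n2 n3 : R) : R :=
  sqrt 3 / 2 * (n3 - n2) * (n1 - n2 - n3).

Definition WH_constraint (n1 n2 n3 sp sm : R) : Prop :=
  sp ^ 2 + sm ^ 2
  + 3 / 4 * (n1 ^ 2 + n2 ^ 2 + n3 ^ 2 - 2 * (n1 * n2 + n2 * n3 + n1 * n3)) = 1.

Definition WH_solution (N1 N2 N3 Sp Sm : R -> R) : Prop :=
  forall t : R,
    is_derive N1 t ((WH_q (Sp t) (Sm t) - 4 * Sp t) * N1 t) /\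
    is_derive N2 t ((WH_q (Sp t) (Sm t) + 2 * Sp t + 2 * sqrt 3 * Sm t) * N2 t) /\
    is_derive N3 t ((WH_q (Sp t) (Sm t) + 2 * Sp t - 2 * sqrt 3 * Sm t) * N3 t) /\
    is_derive Sp t (- (2 - WH_q (Sp t) (Sm t)) * Sp t - 3 * WH_Splus (N1 t) (N2 t) (N3 t)) /\
    is_derive Sm t (- (2 - WH_q (Sp t) (Sm t)) * Sm t - 3 * WH_Sminus (N1 t) (N2 t) (N3 t)).

From Stdlib Require Import Reals Lra Psatz.
From Coquelicot Require Import Coquelicot.
Open Scope R_scope.

(* Along a solution, V = Sigma_+ - (sqrt 3 / 2) Sigma_- (N2 - N3) / (N2 + N3 - N1)
   + 2 ln (- N1 N2 N3) grows at rate at least 1/2: since (ln (- N1 N2 N3))' = 3 q, the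
   constraint turns V' into 9/4 N1^2 plus a quadratic expression in Sigma_+- whose cross
   terms are absorbed by AM-GM.  The first two terms of V are bounded by the constraint,
   so - N1 N2 N3 -> oo.  As the constraint also gives - N1 (N2 + N3) <= 2/3, this product
   is at most N2, at most N3 and at most 1 / (- N1), which yields the three limits. *)

Lemma sqrt3_sqr : sqrt 3 * sqrt 3 = 3.
Proof. apply sqrt_sqrt; lra. Qed.

Lemma sqrt3_bounds : 0 < sqrt 3 < 2.
Proof.
  pose proof sqrt3_sqr.
  assert (0 < sqrt 3) by (apply sqrt_lt_R0; lra).
  split; nra.
Qed.

Lemma WH_constraint_bounds n1 n2 n3 sp sm :
  n1 < 0 -> 0 < n2 -> 0 < n3 -> WH_constraint n1 n2 n3 sp sm ->
  sp ^ 2 + sm ^ 2 <= 1 /\ - n1 * (n2 + n3) <= 2 / 3.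
Proof.
  unfold WH_constraint; intros h1 h2 h3 hc.
  assert (0 <= - n1 * (n2 + n3)) by (apply Rmult_le_pos; lra).
  pose proof (pow2_ge_0 (n2 - n3)); pose proof (pow2_ge_0 n1).
  pose proof (pow2_ge_0 sp); pose proof (pow2_ge_0 sm).
  split; nra.
Qed.

Definition WH_ratio (n1 n2 n3 : R) : R := (n2 - n3) / (n2 + n3 - n1).

Definition WH_product (n1 n2 n3 : R) : R := - n1 * n2 * n3.

(* Along the flow [WH_ratio]' = 6 Sigma_+ [WH_ratio_weight_p] + 2 sqrt 3 Sigma_- [WH_ratio_weight_m]. *)
Definition WH_ratio_weight_p (n1 n2 n3 : R) : R :=
  - n1 * (n2 - n3) / (n2 + n3 - n1) ^ 2.

Definition WH_ratio_weight_m (n1 n2 n3 : R) : R :=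
  ((n2 + n3) * (n2 + n3 - n1) - (n2 - n3) ^ 2) / (n2 + n3 - n1) ^ 2.

Lemma Rdiv_bounds_1 a c : 0 < c -> - c <= a <= c -> -1 <= a / c <= 1.
Proof.
  intros hc [ha hb]; split.
  - apply Rle_div_r; lra.
  - apply Rle_div_l; lra.
Qed.

Section RatioBounds.
Variables n1 n2 n3 : R.
Hypotheses (h1 : n1 < 0) (h2 : 0 < n2) (h3 : 0 < n3).

Lemma WH_ratio_bounds : -1 <= WH_ratio n1 n2 n3 <= 1.
Proof. apply Rdiv_bounds_1; lra. Qed.

Lemma WH_ratio_weight_p_bounds : -1 <= WH_ratio_weight_p n1 n2 n3 <= 1.
Proof.
  apply Rdiv_bounds_1; [nra|].
  split; nra.
Qed.

Lemma WH_ratio_weight_m_bounds : 0 <= WH_ratio_weight_m n1 n2 n3 <= 1.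
Proof.
  unfold WH_ratio_weight_m.
  assert (0 <= (n2 + n3) * (n2 + n3 - n1) - (n2 - n3) ^ 2 <= (n2 + n3 - n1) ^ 2)
    by (pose proof (pow2_ge_0 n1); pose proof (pow2_ge_0 (n2 - n3)); split; nra).
  split; [apply Rdiv_le_0_compat; nra|].
  apply Rdiv_bounds_1; nra.
Qed.

End RatioBounds.

Definition lyapunov_rate_core (sp sm g a b : R) : R :=
  - (2 - WH_q sp sm) * (sp - sqrt 3 / 2 * g * sm) + 1 + 11 * (sp ^ 2 + sm ^ 2)
  - 3 * sqrt 3 * a * sp * sm - 3 * b * sm ^ 2.

Lemma lyapunov_rate_core_ge sp sm g a b :
  sp ^ 2 + sm ^ 2 <= 1 -> -1 <= g <= 1 -> -1 <= a <= 1 -> 0 <= b <= 1 ->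
  1 / 2 <= lyapunov_rate_core sp sm g a b.
Proof.
  unfold lyapunov_rate_core, WH_q; intros hP hg ha hb.
  pose proof sqrt3_sqr as r2; pose proof sqrt3_bounds as r02.
  set (r := sqrt 3) in *.
  set (c := 2 - 2 * (sp ^ 2 + sm ^ 2)).
  pose proof (pow2_ge_0 sp); pose proof (pow2_ge_0 sm).
  assert (hc : 0 <= c <= 2) by (unfold c; split; lra).
  assert (hc2 : c ^ 2 <= 4) by nra.
  assert (hsp : (c * sp) ^ 2 <= 4 * sp ^ 2).
  { rewrite Rpow_mult_distr. nra. }
  assert (hsm : (r / 2 * c * g * sm) ^ 2 <= 3 * sm ^ 2).
  { replace ((r / 2 * c * g * sm) ^ 2) with (r * r / 4 * (c * g) ^ 2 * sm ^ 2) by field.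
    assert (g ^ 2 <= 1) by nra.
    assert ((c * g) ^ 2 <= 4) by (rewrite Rpow_mult_distr; nra).
    rewrite r2; nra. }
  assert (hra : -2 <= r * a <= 2) by nra.
  assert (hcross : 3 * r * a * sp * sm <= 3 * (sp ^ 2 + sm ^ 2)).
  { pose proof (pow2_ge_0 (sp - sm)); pose proof (pow2_ge_0 (sp + sm)); nra. }
  (* AM-GM for the two terms linear in [c] *)
  pose proof (pow2_ge_0 (c * sp - 1 / 2)).
  pose proof (pow2_ge_0 (r / 2 * c * g * sm + 1 / 2)).
  nra.
Qed.

Definition WH_lyapunov (n1 n2 n3 sp sm : R) : R :=
  sp - sqrt 3 / 2 * (sm * WH_ratio n1 n2 n3) + 2 * ln (WH_product n1 n2 n3).

Definition WH_lyapunov_rate (n1 n2 n3 sp sm : R) : R :=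
  (- (2 - WH_q sp sm) * sp - 3 * WH_Splus n1 n2 n3)
  - sqrt 3 / 2 * ((- (2 - WH_q sp sm) * sm - 3 * WH_Sminus n1 n2 n3) * WH_ratio n1 n2 n3
                  + sm * (6 * sp * WH_ratio_weight_p n1 n2 n3
                          + 2 * sqrt 3 * sm * WH_ratio_weight_m n1 n2 n3))
  + 2 * (3 * WH_q sp sm).

Lemma WH_lyapunov_rate_eq n1 n2 n3 sp sm :
  n1 < 0 -> 0 < n2 -> 0 < n3 -> WH_constraint n1 n2 n3 sp sm ->
  WH_lyapunov_rate n1 n2 n3 sp sm
  = 9 / 4 * n1 ^ 2 + lyapunov_rate_core sp sm (WH_ratio n1 n2 n3)
                       (WH_ratio_weight_p n1 n2 n3) (WH_ratio_weight_m n1 n2 n3).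
Proof.
  unfold WH_constraint; intros h1 h2 h3 hc.
  (* A field identity for any value of [sqrt 3]; the constraint and [sqrt 3 * sqrt 3 = 3]
     enter only through the last two terms. *)
  assert (E : WH_lyapunov_rate n1 n2 n3 sp sm
    = 9 / 4 * n1 ^ 2 + lyapunov_rate_core sp sm (WH_ratio n1 n2 n3)
                         (WH_ratio_weight_p n1 n2 n3) (WH_ratio_weight_m n1 n2 n3)
      + (sp ^ 2 + sm ^ 2
         + 3 / 4 * (n1 ^ 2 + n2 ^ 2 + n3 ^ 2 - 2 * (n1 * n2 + n2 * n3 + n1 * n3)) - 1)
      + (sqrt 3 * sqrt 3 - 3) * (3 / 4 * (n2 - n3) ^ 2 - sm ^ 2 * WH_ratio_weight_m n1 n2 n3)).
  { unfold WH_lyapunov_rate, lyapunov_rate_core, WH_Splus, WH_Sminus, WH_q,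
      WH_ratio, WH_ratio_weight_p, WH_ratio_weight_m.
    field; lra. }
  rewrite E, hc, sqrt3_sqr; ring.
Qed.

Lemma WH_lyapunov_rate_ge n1 n2 n3 sp sm :
  n1 < 0 -> 0 < n2 -> 0 < n3 -> WH_constraint n1 n2 n3 sp sm ->
  1 / 2 <= WH_lyapunov_rate n1 n2 n3 sp sm.
Proof.
  intros h1 h2 h3 hc.
  rewrite WH_lyapunov_rate_eq by assumption.
  pose proof (pow2_ge_0 n1).
  enough (1 / 2 <= lyapunov_rate_core sp sm (WH_ratio n1 n2 n3)
                     (WH_ratio_weight_p n1 n2 n3) (WH_ratio_weight_m n1 n2 n3)) by lra.
  apply lyapunov_rate_core_ge.
  - exact (proj1 (WH_constraint_bounds _ _ _ _ _ h1 h2 h3 hc)).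
  - exact (WH_ratio_bounds _ _ _ h1 h2 h3).
  - exact (WH_ratio_weight_p_bounds _ _ _ h1 h2 h3).
  - exact (WH_ratio_weight_m_bounds _ _ _ h1 h2 h3).
Qed.

Lemma WH_lyapunov_le n1 n2 n3 sp sm :
  n1 < 0 -> 0 < n2 -> 0 < n3 -> WH_constraint n1 n2 n3 sp sm ->
  WH_lyapunov n1 n2 n3 sp sm <= 2 + 2 * ln (WH_product n1 n2 n3).
Proof.
  intros h1 h2 h3 hc; unfold WH_lyapunov.
  destruct (WH_constraint_bounds _ _ _ _ _ h1 h2 h3 hc) as [hP _].
  pose proof (WH_ratio_bounds _ _ _ h1 h2 h3).
  pose proof sqrt3_bounds.
  pose proof (pow2_ge_0 sp); pose proof (pow2_ge_0 sm).
  assert (-1 <= sp <= 1) by (split; nra).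
  assert (-1 <= sm * WH_ratio n1 n2 n3 <= 1) by (split; nra).
  nra.
Qed.

Lemma WH_product_pos n1 n2 n3 :
  n1 < 0 -> 0 < n2 -> 0 < n3 -> 0 < WH_product n1 n2 n3.
Proof.
  intros h1 h2 h3; unfold WH_product.
  assert (0 < - n1 * n2) by nra; nra.
Qed.

Lemma WH_product_bounds n1 n2 n3 sp sm :
  n1 < 0 -> 0 < n2 -> 0 < n3 -> WH_constraint n1 n2 n3 sp sm ->
  WH_product n1 n2 n3 <= n2 /\ WH_product n1 n2 n3 <= n3 /\ - / WH_product n1 n2 n3 <= n1.
Proof.
  intros h1 h2 h3 hc.
  pose proof (WH_product_pos _ _ _ h1 h2 h3) as hD.
  assert (hinv : / WH_product n1 n2 n3 * WH_product n1 n2 n3 = 1) by (field; lra).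
  unfold WH_product in *.
  destruct (WH_constraint_bounds _ _ _ _ _ h1 h2 h3 hc) as [_ hN].
  assert (0 < - n1 * n2 <= 2 / 3) by (split; nra).
  assert (0 < - n1 * n3 <= 2 / 3) by (split; nra).
  repeat split; nra.
Qed.

Lemma growth_of_derive_ge (f df : R -> R) (c a b : R) :
  (forall x, is_derive f x (df x)) -> (forall x, c <= df x) -> a <= b ->
  f a + c * (b - a) <= f b.
Proof.
  intros hf hdf hab.
  destruct (MVT_gen f a b df) as [x [_ hx]].
  - intros x _; apply hf.
  - intros x _. apply derivable_continuous_pt.
    exists (df x); apply is_derive_Reals, hf.
  - pose proof (hdf x). nra.
Qed.

Section Solution.

Variables N1 N2 N3 Sp Sm : R -> R.
Hypothesis solution : WH_solution N1 N2 N3 Sp Sm.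
Hypothesis constraint : forall t, WH_constraint (N1 t) (N2 t) (N3 t) (Sp t) (Sm t).
Hypothesis signs : forall t, N1 t < 0 /\ 0 < N2 t /\ 0 < N3 t.

Lemma is_derive_WH_ratio t :
  is_derive (fun t => WH_ratio (N1 t) (N2 t) (N3 t)) t
    (6 * Sp t * WH_ratio_weight_p (N1 t) (N2 t) (N3 t)
     + 2 * sqrt 3 * Sm t * WH_ratio_weight_m (N1 t) (N2 t) (N3 t)).
Proof.
  destruct (solution t) as [d1 [d2 [d3 _]]]; destruct (signs t) as [h1 [h2 h3]].
  refine (eq_ind _ (is_derive _ t) _ _ _).
  - apply (is_derive_div (fun t => N2 t - N3 t) (fun t => N2 t + N3 t - N1 t)).
    + exact (is_derive_minus _ _ _ _ _ d2 d3).
    + exact (is_derive_minus _ _ _ _ _ (is_derive_plus _ _ _ _ _ d2 d3) d1).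
    + lra.
  - unfold minus, plus, opp; simpl.
    unfold WH_ratio_weight_p, WH_ratio_weight_m, WH_q; field; lra.
Qed.

Lemma is_derive_ln_WH_product t :
  is_derive (fun t => ln (WH_product (N1 t) (N2 t) (N3 t))) t (3 * WH_q (Sp t) (Sm t)).
Proof.
  destruct (solution t) as [d1 [d2 [d3 _]]]; destruct (signs t) as [h1 [h2 h3]].
  pose proof (WH_product_pos _ _ _ h1 h2 h3) as hD.
  refine (eq_ind _ (is_derive _ t) _ _ _).
  - apply (is_derive_comp ln (fun t => WH_product (N1 t) (N2 t) (N3 t))).
    + exact (is_derive_ln _ hD).
    + exact (is_derive_mult _ _ _ _ _
               (is_derive_mult _ _ _ _ _ (is_derive_opp _ _ _ d1) d2 Rmult_comm) d3 Rmult_comm).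
  - unfold WH_product in *; unfold scal, plus, opp; simpl; unfold mult; simpl.
    field; repeat split; lra.
Qed.

Lemma is_derive_WH_lyapunov t :
  is_derive (fun t => WH_lyapunov (N1 t) (N2 t) (N3 t) (Sp t) (Sm t)) t
    (WH_lyapunov_rate (N1 t) (N2 t) (N3 t) (Sp t) (Sm t)).
Proof.
  destruct (solution t) as [_ [_ [_ [dp dm]]]].
  exact (is_derive_plus _ _ _ _ _
           (is_derive_minus _ _ _ _ _ dp
              (is_derive_scal _ _ _ _
                 (is_derive_mult _ _ _ _ _ dm (is_derive_WH_ratio t) Rmult_comm)))
           (is_derive_scal _ _ _ _ (is_derive_ln_WH_product t))).
Qed.

Lemma WH_lyapunov_ge_linear t :
  0 <= t ->
  WH_lyapunov (N1 0) (N2 0) (N3 0) (Sp 0) (Sm 0) + t / 2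
  <= WH_lyapunov (N1 t) (N2 t) (N3 t) (Sp t) (Sm t).
Proof.
  intros ht.
  replace (t / 2) with (1 / 2 * (t - 0)) by field.
  apply (growth_of_derive_ge (fun t => WH_lyapunov (N1 t) (N2 t) (N3 t) (Sp t) (Sm t))
           (fun t => WH_lyapunov_rate (N1 t) (N2 t) (N3 t) (Sp t) (Sm t)));
    [exact is_derive_WH_lyapunov | | exact ht].
  intros x; destruct (signs x) as [h1 [h2 h3]].
  exact (WH_lyapunov_rate_ge _ _ _ _ _ h1 h2 h3 (constraint x)).
Qed.

Lemma is_lim_WH_product :
  is_lim (fun t => WH_product (N1 t) (N2 t) (N3 t)) p_infty p_infty.
Proof.
  set (V0 := WH_lyapunov (N1 0) (N2 0) (N3 0) (Sp 0) (Sm 0)).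
  apply is_lim_spec; intros M.
  exists (Rmax 0 (4 * (M - V0 / 2))); intros t ht.
  pose proof (Rmax_l 0 (4 * (M - V0 / 2))); pose proof (Rmax_r 0 (4 * (M - V0 / 2))).
  destruct (signs t) as [h1 [h2 h3]].
  pose proof (WH_product_pos _ _ _ h1 h2 h3) as hD.
  pose proof (WH_lyapunov_ge_linear t ltac:(lra)) as hV; fold V0 in hV.
  pose proof (WH_lyapunov_le _ _ _ _ _ h1 h2 h3 (constraint t)).
  pose proof (exp_ineq1_le (ln (WH_product (N1 t) (N2 t) (N3 t)))).
  rewrite exp_ln in * by exact hD.
  lra.
Qed.

Lemma is_lim_N1 : is_lim N1 p_infty 0.
Proof.
  set (D t := WH_product (N1 t) (N2 t) (N3 t)).
  assert (hinv : is_lim (fun t => - / D t) p_infty 0).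
  { pose proof (is_lim_opp _ _ _ (is_lim_inv _ _ _ is_lim_WH_product ltac:(discriminate))) as h.
    simpl in h; rewrite Ropp_0 in h; exact h. }
  refine (is_lim_le_le_loc _ (fun _ => 0) _ _ _ _ hinv (is_lim_const 0 p_infty)).
  apply filter_forall; intros t; destruct (signs t) as [h1 [h2 h3]]; split.
  - exact (proj2 (proj2 (WH_product_bounds _ _ _ _ _ h1 h2 h3 (constraint t)))).
  - lra.
Qed.

Lemma is_lim_N2 : is_lim N2 p_infty p_infty.
Proof.
  refine (is_lim_le_p_loc _ _ _ (filter_forall _ _) is_lim_WH_product); intros t.
  destruct (signs t) as [h1 [h2 h3]].
  exact (proj1 (WH_product_bounds _ _ _ _ _ h1 h2 h3 (constraint t))).
Qed.

Lemma is_lim_N3 : is_lim N3 p_infty p_infty.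
Proof.
  refine (is_lim_le_p_loc _ _ _ (filter_forall _ _) is_lim_WH_product); intros t.
  destruct (signs t) as [h1 [h2 h3]].
  exact (proj1 (proj2 (WH_product_bounds _ _ _ _ _ h1 h2 h3 (constraint t)))).
Qed.

End Solution.

Theorem mainTheorem12 (N1 N2 N3 Sp Sm : R -> R) :
  WH_solution N1 N2 N3 Sp Sm ->
  (forall t : R, WH_constraint (N1 t) (N2 t) (N3 t) (Sp t) (Sm t)) ->
  (forall t : R, N1 t < 0 /\ 0 < N2 t /\ 0 < N3 t) ->
  is_lim N1 p_infty 0 /\ is_lim N2 p_infty p_infty /\ is_lim N3 p_infty p_infty.
Proof.
  intros solution constraint signs.
  split; [|split].
  - exact (is_lim_N1 _ _ _ _ _ solution constraint signs).
  - exact (is_lim_N2 _ _ _ _ _ solution constraint signs).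
  - exact (is_lim_N3 _ _ _ _ _ solution constraint signs).
Qed.
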